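(* Let $(M,d,+)$ be a metric semigroup, $f:I_a^b\to M$, $0\ne\alpha\le1$, and $x,y\in I_a^b$ with $x\le y$. Then $$\mathrm{md}_{|\alpha|}(f_\alpha^x,I_x^y\lfloor\alpha)\le\sum_{\beta\in\mathbb N_0^n,\ \alpha\le\beta\le1}\mathrm{md}_{|\beta|}\big(f_\beta^a,I_{a+\alpha(x-a)}^{x+\alpha(y-x)}\lfloor\beta\big).$$
   Context: Fix $n\in\mathbb N$ and $a,b\in\mathbb R^n$ with $a<b$. Inequalities between points of $\mathbb R^n$ or multiindices are componentwise ($x\le y$ means $x_i\le y_i$ for all $i$; $x<y$ means $x_i<y_i$ for all $i$). For $x\le y$, $I_x^y=\prod_{i=1}^n[x_i,y_i]$. For $\theta\in\mathbb N_0^n$ and $x\in\mathbb R^n$, $\theta x=(\theta_1x_1,\dots,\theta_nx_n)$ and $|\theta|=\theta_1+\dots+\theta_n$; $0$ and $1$ denote $(0,\dots,0)$ and $(1,\dots,1)$. A multiindex $\theta$ with $0\le\theta\le1$ is even (odd) if $|\theta|$ is even (odd); $\mathcal E(n)$ and $\mathcal O(n)$ are the sets of even and odd $\theta\le1$. A metric semigroup $(M,d,+)$ is a metric space $(M,d)$ with an Abelian semigroup operation $+$ such that $d(u+w,v+w)=d(u,v)$ for all $u,v,w\in M$. For $f:I_a^b\to M$ and $x\le y$ in $I_a^b$, $\mathrm{md}_n(f,I_x^y)=d\big(\sum_{\theta\in\mathcal E(n)}f(x+\theta(y-x)),\sum_{\eta\in\mathcal O(n)}f(x+\eta(y-x))\big)$.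 For $0\ne\alpha\le1$ ($\alpha\in\mathbb N_0^n$) and $x\in\mathbb R^n$ let $x\lfloor\alpha=(x_i:\alpha_i=1)\in\mathbb R^{|\alpha|}$ and $I_x^y\lfloor\alpha=I_{x\lfloor\alpha}^{y\lfloor\alpha}$. For $z\in I_a^b$ the truncated map $f_\alpha^z:I_a^b\lfloor\alpha\to M$ is $f_\alpha^z(x\lfloor\alpha)=f(z+\alpha(x-z))$, $x\in I_a^b$. The quantity $\mathrm{md}_{|\alpha|}(f_\alpha^z,I_x^y\lfloor\alpha)$ is $\mathrm{md}_{|\alpha|}$ (the formula above in dimension $|\alpha|$) for the map $f_\alpha^z$ on the rectangle $I_{x\lfloor\alpha}^{y\lfloor\alpha}\subset\mathbb R^{|\alpha|}$. *)

From Stdlib Require Import Reals.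
From mathcomp Require Import all_boot.
Set Implicit Arguments. Unset Strict Implicit. Unset Printing Implicit Defensive.

Record metric_semigroup := MetricSemigroup {
  ms_carrier :> Type;
  ms_d : ms_carrier -> ms_carrier -> R;
  ms_add : ms_carrier -> ms_carrier -> ms_carrier;
  ms_d_eq0 : forall u v, ms_d u v = R0 <-> u = v;
  ms_d_sym : forall u v, ms_d u v = ms_d v u;
  ms_d_tri : forall u v w, Rle (ms_d u w) (Rplus (ms_d u v) (ms_d v w));
  ms_addA : forall u v w, ms_add u (ms_add v w) = ms_add (ms_add u v) w;
  ms_addC : forall u v, ms_add u v = ms_add v u;
  ms_d_transl : forall u v w, ms_d (ms_add u w) (ms_add v w) = ms_d u v
}.

Definition pt (k : nat) := 'I_k -> R.

Definition ple k (x y : pt k) : Prop := forall i, Rle (x i) (y i).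
Definition plt k (x y : pt k) : Prop := forall i, Rlt (x i) (y i).
Definition inbox k (a b x : pt k) : Prop := ple a x /\ ple x b.

(* A multiindex theta with 0 <= theta <= 1 is identified with the set of
   coordinates i where theta_i = 1; |theta| = #|theta|.  theta x is the
   componentwise product. *)
Definition pmul k (th : {set 'I_k}) (x : pt k) : pt k :=
  fun i => if i \in th then x i else R0.
Definition padd k (x y : pt k) : pt k := fun i => Rplus (x i) (y i).
Definition psub k (x y : pt k) : pt k := fun i => Rminus (x i) (y i).

(* Iterated semigroup sum over a (possibly empty) finite index range:
   the empty sum is None, a nonempty one is Some of the semigroup sum. *)
Definition oadd (M : metric_semigroup) (u v : option M) : option M :=
  match u, v with
  | Some u', Some v' => Some (ms_add u' v')
  | Some _, None => u
  | None, _ => v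
  end.

Definition odist (M : metric_semigroup) (u v : option M) : R :=
  match u, v with
  | Some u', Some v' => ms_d u' v'
  | _, _ => R0
  end.

Definition md (M : metric_semigroup) (k : nat) (g : pt k -> M) (x y : pt k) : R :=
  odist
    (\big[@oadd M/None]_(th : {set 'I_k} | ~~ odd #|th|)
        Some (g (padd x (pmul th (psub y x)))))
    (\big[@oadd M/None]_(et : {set 'I_k} | odd #|et|)
        Some (g (padd x (pmul et (psub y x))))).

(* Truncation x|alpha = (x_i : alpha_i = 1) in R^{|alpha|}, coordinates
   listed in increasing order of i. *)
Definition trunc n (al : {set 'I_n}) (x : pt n) : pt #|al| :=
  fun j => x (enum_val j).
Arguments trunc {n} al x.

(* Canonical point x of R^n with x|alpha = p and x_i = z_i off alpha. *)
Definition untrunc n (al : {set 'I_n}) (z : pt n) (p : pt #|al|) : pt n :=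
  fun i => match [pick j : 'I_#|al| | enum_val j == i] with
           | Some j => p j
           | None => z i
           end.
Arguments untrunc {n} al z p.

Definition ftrunc (M : metric_semigroup) n (f : pt n -> M) (al : {set 'I_n})
    (z : pt n) : pt #|al| -> M :=
  fun p => f (padd z (pmul al (psub (untrunc al z p) z))).
Arguments ftrunc {M n} f al z.
Arguments md {M k} g x y.

From HB Require Import structures.
From Stdlib Require Import Reals Lra FunctionalExtensionality.
From mathcomp Require Import all_boot.
Set Implicit Arguments. Unset Strict Implicit. Unset Printing Implicit Defensive.

(* Write u = a + al(x - a), v = x + al(y - x) and, for T a set of coordinates,
   let g T be the vertex of the box [u, v] equal to v on T and to u off T.
   Each md in the statement is a difference of even and odd sums of values
   f (g T): on the left over the T containing the complement of al, in the
   be-term over the T inside be.  In the double sum over pairs (be, T) with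
   al, T inside be, signed by (-1)^(|be| + |T| + |al|), the pairs with
   al :|: T <> setT cancel two by two (toggle in be a coordinate outside
   al :|: T), and the remaining pairs (be = setT) make up the left side.
   Without subtraction this reads E_s + r = P_s for both signs s with one
   common r; translation invariance and subadditivity of d conclude. *)

Section MetricSemigroup.
Variable M : metric_semigroup.

Lemma ms_d_addD (p1 p2 q1 q2 : M) :
  Rle (ms_d (ms_add p1 p2) (ms_add q1 q2)) (Rplus (ms_d p1 q1) (ms_d p2 q2)).
Proof.
apply: Rle_trans (ms_d_tri _ (ms_add q1 p2) _) _.
rewrite ms_d_transl (ms_addC q1 p2) (ms_addC q1 q2) ms_d_transl; lra.
Qed.

Lemma oaddA : associative (@oadd M).
Proof. by move=> [u|] [v|] [w|] //=; rewrite ms_addA. Qed.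

Lemma oaddC : commutative (@oadd M).
Proof. by move=> [u|] [v|] //=; rewrite ms_addC. Qed.

Lemma oadd0 : left_id None (@oadd M).
Proof. by case. Qed.

HB.instance Definition _ :=
  Monoid.isComLaw.Build (option M) None (@oadd M) oaddA oaddC oadd0.

Lemma odist_sym (p q : option M) : odist p q = odist q p.
Proof. by case: p => [p|]; case: q => [q|] //=; rewrite ms_d_sym. Qed.

Lemma odist_oaddr (p q c : option M) : isSome p -> isSome q ->
  odist (oadd p c) (oadd q c) = odist p q.
Proof.
by case: p => [p|] //; case: q => [q|] //; case: c => [c|] //= _ _; rewrite ms_d_transl.
Qed.

Lemma odist_big_le (I : finType) (P : pred I) (A B : I -> option M) :
  (forall i, P i -> isSome (A i) && isSome (B i)) ->
  Rle (odist (\big[@oadd M/None]_(i | P i) A i) (\big[@oadd M/None]_(i | P i) B i))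
      (\big[Rplus/R0]_(i | P i) odist (A i) (B i)).
Proof.
move=> AB_some.
pose bounded (p q : option M) r :=
  match p, q with
  | Some p, Some q => Rle (ms_d p q) r
  | None, None => Rle 0 r
  | _, _ => False
  end.
suff: bounded (\big[@oadd M/None]_(i | P i) A i) (\big[@oadd M/None]_(i | P i) B i)
              (\big[Rplus/R0]_(i | P i) odist (A i) (B i)).
  by case: (\big[_/_]_(i | P i) A i) => [p|]; case: (\big[_/_]_(i | P i) B i).
apply: (big_ind3 bounded) => [|[p1|] [p2|] r1 [q1|] [q2|] r2 //= h1 h2|i /AB_some].
- by rewrite /bounded; lra.
- by apply: Rle_trans (ms_d_addD _ _ _ _) _; lra.
- lra.
- lra.
- lra.
- by case: (A i) => [p|] //; case: (B i) => [q|] //= _; lra.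
Qed.

Lemma isSome_big_parity (I : finType) (A : {set I}) (G : {set I} -> M) s :
  A != set0 ->
  isSome (\big[@oadd M/None]_(T : {set I} | (T \subset A) && (odd #|T| == s)) Some (G T)).
Proof.
case/set0Pn=> i Ai.
have PT0 : ((if s then [set i] else set0) \subset A)
            && (odd #|if s then [set i] else set0| == s).
  by case: s; rewrite ?cards1 ?cards0 ?sub1set ?sub0set ?Ai.
rewrite (bigD1 (if s then [set i] else set0)) //=.
by case: (\big[_/_]_(T | _) _).
Qed.

End MetricSemigroup.

Section SignedSubsetPairs.
Variables (R : Type) (idx : R) (op : Monoid.com_law idx).
Variables (I : finType) (al : {set I}) (F : {set I} -> R).

Definition signed_pair s (l : {set I} * {set I}) :=
  [&& al \subset l.1, l.2 \subset l.1 & odd #|l.2| == odd (#|l.1| + #|al|) (+) s].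

Definition covering (T : {set I}) := al :|: T == setT.

Definition toggle_free (T be : {set I}) : {set I} :=
  if [pick k in ~: (al :|: T)] is Some k then
    (if k \in be then be :\ k else k |: be)
  else be.

Lemma toggle_freeK T : involutive (toggle_free T).
Proof.
move=> be; rewrite /toggle_free; case: pickP => [k _|//].
by case: (boolP (k \in be)) => kbe; rewrite !inE eqxx /= ?setD1K ?setU1K.
Qed.

Definition toggle_pair (l : {set I} * {set I}) := (toggle_free l.2 l.1, l.2).

Lemma toggle_pairK : involutive toggle_pair.
Proof. by move=> [be T]; rewrite /toggle_pair /= toggle_freeK. Qed.

Lemma subset_toggle (A B : {set I}) k : k \notin A ->
  (A \subset (if k \in B then B :\ k else k |: B)) = (A \subset B).
Proof.
move=> kA; case: (boolP (k \in B)) => kB; first by rewrite subsetD1 kA andbT.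
apply/subsetP/subsetP => AB i Ai; last by rewrite inE AB ?orbT.
by have := AB i Ai; rewrite in_setU1 => /predU1P [ik|//]; rewrite -ik Ai in kA.
Qed.

Lemma odd_card_toggle (B : {set I}) k :
  odd #|if k \in B then B :\ k else k |: B| = ~~ odd #|B|.
Proof.
case: (boolP (k \in B)) => kB; last by rewrite cardsU1 kB.
by rewrite [in RHS](cardsD1 k B) kB negbK.
Qed.

Lemma signed_pair_toggle s l : ~~ covering l.2 ->
  signed_pair s (toggle_pair l) = signed_pair (~~ s) l.
Proof.
case: l => be T; rewrite /covering /signed_pair /toggle_pair /toggle_free /=.
case: pickP => [k|none_free]; last first.
  case/negP; apply/eqP/setP => i; have := none_free i.
  by rewrite !inE negb_or; case: (i \in al); case: (i \in T).
rewrite !inE negb_or => /andP [kal kT] _.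
rewrite !subset_toggle // oddD odd_card_toggle oddD.
by case: (odd #|be|); case: (odd #|al|); case: s.
Qed.

Lemma big_noncovering_sign :
  \big[op/idx]_(l | signed_pair false l && ~~ covering l.2) F l.2 =
  \big[op/idx]_(l | signed_pair true l && ~~ covering l.2) F l.2.
Proof.
rewrite (reindex_inj (can_inj toggle_pairK)).
apply: eq_bigl => l /=.
by case: (boolP (covering l.2)) => cov; rewrite ?andbF ?andbT ?signed_pair_toggle.
Qed.

Lemma big_covering s :
  \big[op/idx]_(l | signed_pair s l && covering l.2) F l.2 =
  \big[op/idx]_(T : {set I} | (T \subset al) && (odd #|T| == s)) F (T :|: ~: al).
Proof.
rewrite (reindex_onto (fun T => (setT, T :|: ~: al)) (fun l => l.2 :&: al)) /=.
  apply: eq_bigl => T; rewrite /signed_pair /covering /= !subsetT /=.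
  rewrite setUCA setUCr setUT eqxx andbT setIUl (setIC (~: al)) setICr setU0.
  rewrite eqEsubset subsetIl subsetIidl andbC; case: (boolP (T \subset al)) => //= Tal.
  have Tcompl : T :&: ~: al = set0 by apply/eqP; rewrite -setDE setD_eq0.
  have := cardsUI T (~: al); rewrite Tcompl cards0 addn0 => ->.
  rewrite cardsT -(cardsC al) !oddD.
  by case: (odd #|T|); case: (odd #|al|); case: (odd #|~: al|); case: s.
move=> [be T] /andP [/and3P [albe Tbe _] /eqP cov] /=.
have albeT : al :|: T \subset be by rewrite subUset albe.
rewrite cov subTset in albeT; rewrite (eqP albeT); congr pair.
apply/setP => i; rewrite !inE; case: (boolP (i \in al)) => ial; rewrite ?andbT ?andbF ?orbF //=.
by have := in_setT i; rewrite -cov inE (negbTE ial).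
Qed.

Lemma big_signed_pairs : exists r, forall s,
  op (\big[op/idx]_(T : {set I} | (T \subset al) && (odd #|T| == s)) F (T :|: ~: al)) r =
  \big[op/idx]_(be : {set I} | al \subset be)
     \big[op/idx]_(T : {set I} | (T \subset be) && (odd #|T| == odd (#|be| + #|al|) (+) s)) F T.
Proof.
exists (\big[op/idx]_(l | signed_pair true l && ~~ covering l.2) F l.2) => s.
rewrite pair_big_dep [RHS](bigID (fun l => covering l.2)) /= big_covering.
by case: s; rewrite ?big_noncovering_sign.
Qed.

End SignedSubsetPairs.

Definition blend n (T : {set 'I_n}) (p q : pt n) : pt n :=
  fun i => if i \in T then q i else p i.

Lemma padd_pmul_psub n (T : {set 'I_n}) (p q : pt n) :
  padd p (pmul T (psub q p)) = blend T p q.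
Proof.
apply: functional_extensionality => i; rewrite /padd /pmul /psub /blend.
by case: (i \in T); rewrite /Rminus; ring.
Qed.

Lemma blend_blendr n (T : {set 'I_n}) (p q r : pt n) :
  blend T p (blend T q r) = blend T p r.
Proof. by apply: functional_extensionality => i; rewrite /blend; case: (i \in T). Qed.

Definition trunc_set n (be T : {set 'I_n}) : {set 'I_#|be|} :=
  [set j | enum_val j \in T].

Lemma trunc_blend n (be T : {set 'I_n}) (p q : pt n) :
  blend (trunc_set be T) (trunc be p) (trunc be q) = trunc be (blend T p q).
Proof. by apply: functional_extensionality => j; rewrite /blend /trunc inE. Qed.

Lemma untrunc_trunc n (be : {set 'I_n}) (z p : pt n) :
  untrunc be z (trunc be p) = blend be z p.
Proof.
apply: functional_extensionality => i; rewrite /untrunc /trunc /blend.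
case: pickP => [j /eqP <-|none]; first by rewrite enum_valP.
case: (boolP (i \in be)) => // ibe.
by have := none (enum_rank_in ibe i); rewrite enum_rankK_in ?eqxx.
Qed.

Lemma ftrunc_trunc (M : metric_semigroup) n (f : pt n -> M) (be : {set 'I_n}) (z p : pt n) :
  ftrunc f be z (trunc be p) = f (blend be z p).
Proof. by rewrite /ftrunc untrunc_trunc padd_pmul_psub blend_blendr. Qed.

Lemma trunc_setK n (be T : {set 'I_n}) : T \subset be ->
  [set enum_val j | j in trunc_set be T] = T.
Proof.
move=> Tbe; apply/setP => i; apply/imsetP/idP => [[j]|iT].
  by rewrite inE => jT ->.
by exists (enum_rank_in (subsetP Tbe i iT) i); rewrite ?inE enum_rankK_in // (subsetP Tbe).
Qed.

Lemma big_trunc_set (R : Type) (idx : R) (op : Monoid.com_law idx) n (be : {set 'I_n})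
    (P : nat -> bool) (F : {set 'I_#|be|} -> R) :
  \big[op/idx]_(th : {set 'I_#|be|} | P #|th|) F th =
  \big[op/idx]_(T : {set 'I_n} | (T \subset be) && P #|T|) F (trunc_set be T).
Proof.
rewrite (reindex_onto (trunc_set be) (fun th : {set 'I_#|be|} => [set enum_val j | j in th])) /=.
  apply: eq_bigl => T.
  case: (boolP (T \subset be)) => Tbe /=.
    rewrite trunc_setK // eqxx andbT -{2}(trunc_setK Tbe).
    by rewrite card_imset //; apply: enum_val_inj.
  apply/negbTE; rewrite negb_and orbC; apply/orP; left; apply: contra Tbe => /eqP <-.
  by apply/subsetP => _ /imsetP [j _ ->]; apply: enum_valP.
move=> th _; apply/setP => j; rewrite inE mem_imset //; apply: enum_val_inj.
Qed.

Section VertexSums.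
Variables (M : metric_semigroup) (n : nat) (f : pt n -> M).

Definition vertex_sum (be : {set 'I_n}) (z p q : pt n) (s : bool) : option M :=
  \big[@oadd M/None]_(T : {set 'I_n} | (T \subset be) && (odd #|T| == s))
     Some (f (blend be z (blend T p q))).

Lemma md_ftrunc (be : {set 'I_n}) (z p q : pt n) :
  md (ftrunc f be z) (trunc be p) (trunc be q) =
  odist (vertex_sum be z p q false) (vertex_sum be z p q true).
Proof.
rewrite /md /vertex_sum (big_trunc_set _ (fun k => ~~ odd k)) (big_trunc_set _ odd).
congr odist; apply: eq_big => [T|T _];
  rewrite ?eqbF_neg ?eqb_id ?padd_pmul_psub ?trunc_blend ?ftrunc_trunc //.
Qed.

End VertexSums.

Lemma blend_vertex_id n (al be T : {set 'I_n}) (a x y : pt n) :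
  al \subset be -> T \subset be ->
  blend be a (blend T (blend al a x) (blend al x y)) = blend T (blend al a x) (blend al x y).
Proof.
move=> albe Tbe; apply: functional_extensionality => i; rewrite /blend.
case: (boolP (i \in be)) => // ibe.
by rewrite (contraNF (subsetP Tbe i)) // (contraNF (subsetP albe i)).
Qed.

Lemma blend_corner n (al T : {set 'I_n}) (a x y : pt n) : T \subset al ->
  blend al x (blend T x y) = blend (T :|: ~: al) (blend al a x) (blend al x y).
Proof.
move=> Tal; apply: functional_extensionality => i; rewrite /blend !inE.
by case: (boolP (i \in al)) => ial; rewrite ?orbT ?orbF //; case: (i \in T).
Qed.

Theorem lemma2 (M : metric_semigroup) (n : nat) (a b : pt n) (hab : plt a b)
  (f : pt n -> M) (al : {set 'I_n}) (hal : al != set0)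
  (x y : pt n) (hx : inbox a b x) (hy : inbox a b y) (hxy : ple x y) :
  Rle (md (ftrunc f al x) (trunc al x) (trunc al y))
  (
   \big[Rplus/R0]_(be : {set 'I_n} | al \subset be)
      md (ftrunc f be a)
         (trunc be (padd a (pmul al (psub x a))))
         (trunc be (padd x (pmul al (psub y x))))).
Proof.
rewrite !padd_pmul_psub; set u := blend al a x; set v := blend al x y.
pose F (T : {set 'I_n}) := Some (f (blend T u v)).
have vsum_corner s : vertex_sum f al x x y s =
    \big[@oadd M/None]_(T : {set 'I_n} | (T \subset al) && (odd #|T| == s)) F (T :|: ~: al).
  by apply: eq_bigr => T /andP [Tal _]; rewrite (blend_corner a).
have vsum_box (be : {set 'I_n}) s : al \subset be -> vertex_sum f be a u v s =
    \big[@oadd M/None]_(T : {set 'I_n} | (T \subset be) && (odd #|T| == s)) F T.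
  by move=> albe; apply: eq_bigr => T /andP [Tbe _]; rewrite blend_vertex_id.
have nonempty (be : {set 'I_n}) : al \subset be -> be != set0.
  by move=> albe; apply: contraNneq hal => be0; rewrite -subset0 -be0.
have [r Er] := big_signed_pairs (@oadd M) al F.
rewrite md_ftrunc !vsum_corner -(odist_oaddr r) ?isSome_big_parity // !Er.
apply: Rle_trans (odist_big_le _) _ => [be albe|].
  by rewrite !isSome_big_parity ?nonempty.
right; apply: eq_bigr => be albe; rewrite md_ftrunc !vsum_box // addbF addbT.
by case: (odd _) => //; rewrite odist_sym.
Qed.
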